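(* Let $G=(V,E)$ be a finite simple graph of order $n$ and let $T=n-1$. If $(s,x,y,z)$ is an optimal solution of the integer program with the constraints of the Infection Model $\mathrm{IM}(G,T)$ and objective ''minimize $\sum_{v\in V}s_v+z$'', then $C=\{v\in V\colon s_v=1\}$ is a zero forcing set of $G$ with $\mathrm{th}(G)=\mathrm{th}(G,C)=\sum_{v\in V}s_v+z$.
   Context: Zero forcing: under the standard color change rule a filled vertex $u$ can force a non-filled vertex $v$ if $v$ is the only non-filled neighbor of $u$; $C\subseteq V$ is a zero forcing set if, starting with $C$ filled and repeatedly forcing, all of $V$ becomes filled. The propagation time $\mathrm{pt}(G,C)$ is the smallest $t^*$ such that, starting from $C^{[0]}=C$ and setting $C^{[t]}=C^{[t-1]}\cup\{v\notin C^{[t-1]}\colon$ some $u\in C^{[t-1]}$ has $v$ as its only neighbor outside $C^{[t-1]}\}$, one has $C^{[t^*]}=V$ ($\infty$ if $C$ is not a zero forcing set). The throttling number of $C$ is $\mathrm{th}(G,C)=|C|+\mathrm{pt}(G,C)$ and $\mathrm{th}(G)=\min_{C\subseteq V}\mathrm{th}(G,C)$. $N(u)$ is the neighborhood of $u$. Infection Model constraints: let $A$ be the set of arcs containing both $(u,v)$ and $(v,u)$ for each edge $\{u,v\}\in E$. Variables $s_v\in\{0,1\}$ and $x_v\in\{0,1,\dots,T\}$ for $v\in V$, $y_a\in\{0,1\}$ for $a\in A$, and $z\in\{0,1,\dots,T\}$, subject to: (i) $s_v+\sum_{a=(u,v)\in A}y_a=1$ for all $v\in V$; (ii) $x_u-x_v+(T+1)y_a\leq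 T$ for all $a=(u,v)\in A$; (iii) $x_w-x_v+(T+1)y_a\leq T$ for all $a=(u,v)\in A$ and $w\in N(u)\setminus\{v\}$; (iv) $x_v-z\leq 0$ for all $v\in V$. *)

From mathcomp Require Import all_boot.
From Stdlib Require Import ClassicalEpsilon.
Set Implicit Arguments. Unset Strict Implicit. Unset Printing Implicit Defensive.

Definition simple_graph (V : finType) (e : rel V) : Prop :=
  symmetric e /\ irreflexive e.

Section ZeroForcing.
Variables (V : finType) (e : rel V).

Definition force_step (C : {set V}) : {set V} :=
  C :|: [set v | (v \notin C) &&
     [exists u, (u \in C) && (e u v) &&
        [forall w, (e u w && (w \notin C)) ==> (w == v)]]].

Definition zero_forcing_set (C : {set V}) : Prop :=
  exists t, iter t force_step C = setT.

(* propagation time: Some (least t with C^[t] = V), or None (= infinity). *)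
Definition prop_time (C : {set V}) : option nat :=
  match excluded_middle_informative
          (exists t, (fun t => iter t force_step C == setT) t) with
  | left H => Some (ex_minn H)
  | right _ => None
  end.

Definition throttling_of (C : {set V}) : option nat :=
  omap (fun p => #|C| + p) (prop_time C).

Definition is_throttling_number (k : nat) : Prop :=
  (exists C, throttling_of C = Some k) /\
  (forall C k', throttling_of C = Some k' -> k <= k').

(* Infection Model IM(G,T); variables s_v, y_a in {0,1} (booleans),
   x_v, z in {0..T}; y is indexed by ordered pairs, only arcs (u,v) with
   e u v are used.  Constraints (ii),(iii) are rearranged to avoid
   truncated subtraction: a - b + c <= T  <->  a + c <= T + b. *)
Definition IM_feasible (T : nat) (s : V -> bool) (x : V -> nat)
    (y : V -> V -> bool) (z : nat) : Prop :=
  (forall v, x v <= T) /\ z <= T /\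
  (forall v, s v + \sum_(u | e u v) (y u v : nat) = 1) /\
  (forall u v, e u v -> x u + T.+1 * y u v <= T + x v) /\
  (forall u v w, e u v -> e u w -> w != v -> x w + T.+1 * y u v <= T + x v) /\
  (forall v, x v <= z).

Definition IM_objective (s : V -> bool) (z : nat) : nat :=
  \sum_v (s v : nat) + z.

Definition IM_optimal (T : nat) (s : V -> bool) (x : V -> nat)
    (y : V -> V -> bool) (z : nat) : Prop :=
  IM_feasible T s x y z /\
  forall s' x' y' z', IM_feasible T s' x' y' z' ->
    IM_objective s z <= IM_objective s' z'.

End ZeroForcing.

(** Feasible solutions of IM(G,T) and zero forcing sets with propagation time
    at most T are two views of the same object.  Reading [x v] as the round in
    which [v] is filled and [y (u,v) = 1] as "u forces v", constraint (ii) says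
    a forcer is filled before the vertex [v] it forces, and (iii) says every
    other neighbour of the forcer is filled before [v] too; hence every [v]
    with [x v <= t] lies in [C^[t]], so [C] propagates within [z] rounds.  Conversely, a set [C] with propagation time [p] yields a feasible
    solution of objective [|C| + p] by taking [x v] to be the round in which
    [v] is filled and letting each vertex outside [C] choose one forcer.  Since
    propagation time never exceeds [n - 1], every throttling value [th(G,C)] is
    the objective of a feasible solution of IM(G, n - 1), and the optimum of
    the program is exactly [th(G)]. *)
From mathcomp Require Import all_boot zify.
From Stdlib Require Import ClassicalEpsilon.
Set Implicit Arguments. Unset Strict Implicit.

Lemma sum_nat_card (V : finType) (P : pred V) :
  \sum_v (P v : nat) = #|[set v | P v]|.
Proof.
by rewrite -sum1dep_card [RHS]big_mkcond; apply: eq_bigr => v _; case: (P v).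
Qed.

Section ZeroForcingIM.
Variables (V : finType) (e : rel V).
Implicit Types (C : {set V}) (p t : nat).

Local Notation filled t C := (iter t (force_step e) C).

Lemma mem_force_step C v :
  (v \in force_step e C) = (v \in C) || [exists u, (u \in C) && e u v &&
     [forall w, (e u w && (w \notin C)) ==> (w == v)]].
Proof. by rewrite !inE; case: (v \in C). Qed.

Lemma filled_mono C m n : m <= n -> filled m C \subset filled n C.
Proof.
move/subnK <-; elim: (n - m) => [|k IH] //=.
exact: subset_trans IH (subsetUl _ _).
Qed.

Lemma force_step_set0 : force_step e set0 = set0.
Proof. by apply/setP => v; rewrite !inE; apply/existsP => -[u]; rewrite inE. Qed.

Lemma filled_stable C k :
  filled k.+1 C = filled k C -> forall m, filled (m + k) C = filled k C.
Proof. by move=> /= fixC; elim=> [|m IH] //=; rewrite IH. Qed.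

Lemma prop_timeP C p :
  prop_time e C = Some p <->
  filled p C = setT /\ forall t, filled t C = setT -> p <= t.
Proof.
rewrite /prop_time; case: excluded_middle_informative => [ex | nex].
  case: ex_minnP => q /eqP fillq minq; split=> [[<-] | [fillp minp]].
    by split=> // t /eqP; apply: minq.
  by congr Some; apply/eqP; rewrite eqn_leq minp // minq //; apply/eqP.
by split=> // -[fillp _]; case: nex; exists p; apply/eqP.
Qed.

Lemma zero_forcing_prop_time C t :
  filled t C = setT -> exists p, prop_time e C = Some p.
Proof.
rewrite /prop_time; case: excluded_middle_informative => [ex | nex] fillt.
  by exists (ex_minn ex).
by case: nex; exists t; apply/eqP.
Qed.

(* A round that fills nothing new would leave the process stuck before [p]. *)
Lemma card_filled C p :
  prop_time e C = Some p -> forall k, k <= p -> k + #|C| <= #|filled k C|.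
Proof.
move=> /prop_timeP [fillp minp]; elim=> [|k IH] // ltkp.
suff: filled k C \proper filled k.+1 C.
  by move/proper_card; have := IH (ltnW ltkp); lia.
rewrite properEneq filled_mono // andbT; apply/eqP => fixC.
have := filled_stable (esym fixC) (p - k); rewrite subnK ?(ltnW ltkp) // fillp.
by move/esym/minp; rewrite leqNgt ltkp.
Qed.

Lemma prop_time_le_card C p : prop_time e C = Some p -> p <= #|V| - 1.
Proof.
move=> ptC; have := card_filled ptC (leqnn p); have := max_card (filled p C).
case: (posnP #|C|) => [/eqP | ] C0; last by lia.
move: ptC; rewrite cards_eq0 in C0; rewrite (eqP C0) => /prop_timeP [fillp minp].
have fill0 t : filled t set0 = set0 by elim: t => //= t ->; apply: force_step_set0.
suff: p <= 0 by lia.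
by apply: minp; rewrite /= -(fill0 p) fillp.
Qed.

Section FeasibleToForcing.
Variables (T : nat) (s : V -> bool) (x : V -> nat) (y : V -> V -> bool) (z : nat).
Hypothesis feas : IM_feasible e T s x y z.

Lemma IM_feasible_forcer v : ~~ s v -> exists2 u, e u v & y u v.
Proof.
case: feas => _ [_ [one_in _]] nsv.
case: (pickP (fun u => e u v && y u v)) => [u /andP[] | none]; first by exists u.
suff: \sum_(u | e u v) (y u v : nat) = 0 by have := one_in v; rewrite (negbTE nsv); lia.
by apply: big1 => u euv; have := none u; rewrite euv => /= ->.
Qed.

Lemma IM_feasible_filled t v : x v <= t -> v \in filled t [set v | s v].
Proof.
have [_ [_ [_ [forcer_first [others_first _]]]]] := feas.
elim: t v => [|t IH] v xvt; case sv: (s v).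
- by rewrite inE sv.
- have [u euv yuv] := IM_feasible_forcer (negbT sv).
  by have := forcer_first u v euv; rewrite yuv muln1; lia.
- by apply: (subsetP (filled_mono _ (leq0n t.+1))); rewrite inE sv.
have [u euv yuv] := IM_feasible_forcer (negbT sv).
have := forcer_first u v euv; rewrite yuv muln1 => xuv.
rewrite iterS mem_force_step; case: (v \in filled t _) => //=.
apply/existsP; exists u; rewrite euv IH /=; last by lia.
apply/forallP => w; apply/implyP => /andP[euw]; apply: contraNT => wv.
by apply: IH; have := others_first u v w euv euw wv; rewrite yuv muln1; lia.
Qed.

Lemma IM_feasible_zero_forcing : filled z [set v | s v] = setT.
Proof.
have [_ [_ [_ [_ [_ x_le_z]]]]] := feas.
by apply/setP => v; rewrite inE; apply: IM_feasible_filled.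
Qed.

End FeasibleToForcing.

Section ForcingToFeasible.
Variables (C : {set V}) (p : nat).
Hypothesis ptC : prop_time e C = Some p.

Lemma eventually_filled v : exists t, v \in filled t C.
Proof. by have /prop_timeP[fillp _] := ptC; exists p; rewrite fillp inE. Qed.

Definition fill_time v : nat := ex_minn (eventually_filled v).

Lemma fill_timeP v : v \in filled (fill_time v) C.
Proof. by rewrite /fill_time; case: ex_minnP. Qed.

Lemma fill_time_min v t : v \in filled t C -> fill_time v <= t.
Proof. by rewrite /fill_time; case: ex_minnP => m _; apply. Qed.

Lemma fill_time_le v : fill_time v <= p.
Proof.
by have /prop_timeP[fillp _] := ptC; apply: fill_time_min; rewrite fillp inE.
Qed.

Lemma fill_time_gt0 v : v \notin C -> 0 < fill_time v.
Proof.
by move=> vC; have := fill_timeP v; case: (fill_time v) => //=; rewrite (negbTE vC).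
Qed.

(* [u] can perform the force that fills [v] in round [fill_time v]. *)
Definition forces u v : bool :=
  let F := filled (fill_time v).-1 C in
  (u \in F) && e u v && [forall w, (e u w && (w \notin F)) ==> (w == v)].

Lemma exists_forcer v : v \notin C -> exists u, forces u v.
Proof.
move=> vC; have := fill_timeP v; have := @fill_time_min v.
rewrite /forces; case: (fill_time v) (fill_time_gt0 vC) => // k _ min_k.
rewrite iterS mem_force_step => /orP[v_early | /existsP[u forces_uv]]; last by exists u.
by have := min_k _ v_early; rewrite ltnn.
Qed.

Definition chosen_forcer u v : bool :=
  (v \notin C) && ([pick u' | forces u' v] == Some u).

Lemma chosen_forcerP u v : chosen_forcer u v -> v \notin C /\ forces u v.
Proof. by case/andP=> vC; case: pickP => // u' forces_u'v /eqP[<-]. Qed.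

Lemma sum_chosen_forcer v :
  (v \in C) + \sum_(u | e u v) (chosen_forcer u v : nat) = 1.
Proof.
rewrite /chosen_forcer; case: (boolP (v \in C)) => [vC | vC] /=.
  by rewrite big1.
case: pickP => [u0 forces_u0v | none]; last first.
  by have [u] := exists_forcer vC; rewrite none.
have eu0v : e u0 v by case/andP: forces_u0v => /andP[].
rewrite (bigD1 u0) //= eqxx big1 // => u /andP[_ u_neq].
by case: eqP => // -[u0u]; rewrite u0u eqxx in u_neq.
Qed.

Lemma forcing_IM_feasible T :
  p <= T -> IM_feasible e T (fun v => v \in C) fill_time chosen_forcer p.
Proof.
move=> pT; have le_T v : fill_time v <= T by have := fill_time_le v; lia.
split=> //; split=> //; split; first exact: sum_chosen_forcer.
split=> [u v euv | ]; last split=> [u v w euv euw wv | ]; last exact: fill_time_le.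
  case: (boolP (chosen_forcer u v)) => [/chosen_forcerP[vC] | _]; last first.
    by have := le_T u; lia.
  case/andP=> /andP[/fill_time_min u_early _] _.
  by have := fill_time_gt0 vC; lia.
case: (boolP (chosen_forcer u v)) => [/chosen_forcerP[vC] | _]; last first.
  by have := le_T w; lia.
case/andP=> _ /forallP/(_ w); rewrite euw (negbTE wv) implybF negbK /=.
by move/fill_time_min; have := fill_time_gt0 vC; lia.
Qed.

Lemma forcing_IM_objective : IM_objective (fun v => v \in C) p = #|C| + p.
Proof. by rewrite /IM_objective sum_nat_card cardsE. Qed.

End ForcingToFeasible.

Lemma IM_optimal_le_throttling T s x y z C k :
  #|V| - 1 <= T -> IM_optimal e T s x y z -> throttling_of e C = Some k ->
  IM_objective s z <= k.
Proof.
move=> nT [_ opt]; rewrite /throttling_of.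
case ptC: (prop_time e C) => [p|] //= [<-].
rewrite -forcing_IM_objective //; apply: opt (forcing_IM_feasible ptC _).
by have := prop_time_le_card ptC; lia.
Qed.

End ZeroForcingIM.

Theorem corollary3p5 (V : finType) (e : rel V) (s : V -> bool) (x : V -> nat)
    (y : V -> V -> bool) (z : nat) :
  simple_graph e ->
  IM_optimal e (#|V| - 1) s x y z ->
  let C := [set v | s v] in
  zero_forcing_set e C /\
  throttling_of e C = Some (IM_objective s z) /\
  is_throttling_number e (IM_objective s z).
Proof.
move=> _ optimal C; have [feas _] := optimal.
have fill_z := IM_feasible_zero_forcing feas.
have [p ptC] := zero_forcing_prop_time fill_z.
have thC : throttling_of e C = Some (#|C| + p) by rewrite /throttling_of ptC.
have obj_le := IM_optimal_le_throttling (leqnn _) optimal thC.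
have p_le_z : p <= z by have /prop_timeP[_ minp] := ptC; apply: minp.
have obj_eq : IM_objective s z = #|C| + p.
  by apply/eqP; rewrite eqn_leq obj_le /IM_objective sum_nat_card leq_add2l.
rewrite obj_eq; split; first by exists z.
split=> //; split; first by exists C.
by move=> C' k; rewrite -obj_eq; apply: IM_optimal_le_throttling (leqnn _) optimal.
Qed.
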